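(* Let $\delta>0$ be a constant. Consider single-machine scheduling with all jobs available at time $0$, and suppose all predictions are underestimates, i.e. $\hat p_j \le p_j$ for every job $j$. Then PMLF with parameter $\delta$ is $(2+2\delta)$-competitive for minimizing the total completion time $\sum_j C_j$, and it preempts each job $j$ at most $O\big(\frac{1}{\delta}\log_2(p_j/\hat p_j)\big)$ times.
   Context: There are $n$ jobs, all available at time $0$, on a single machine that processes at most one job at a time at unit speed; preemption is allowed. Job $j$ has an unknown processing requirement $p_j \ge 1$ and completes (at time $C_j$) once it has received $p_j$ units of processing; $p_j$ is learned only at completion. For each job a prediction $\hat p_j>0$ is known in advance. A preemption of job $j$ is an interruption of its processing before it completes. An algorithm is $c$-competitive if on every instance its total completion time is at most $c$ times the minimum total completion time of an offline schedule that knows all $p_j$. PMLF (Predicted Multi-Level Feedback) with parameter $\delta>0$: maintain FIFO queues $Q_k$ indexed by integers $k$. Initially each job $j$ is placed into $Q_k$ with $k=\lfloor \log_{1+\delta}\hat p_j\rfloor$. At any time, the machine processes the front job of the non-empty queue of lowest index. Whenever a job $j\in Q_i$ has received total processing $(1+\delta)^{i+1}$ (without completing), it is removed from $Q_i$ and placed at the end of $Q_{i+1}$. *)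

From Stdlib Require Import Reals List ZArith Arith.
Open Scope R_scope.

Fixpoint sumR (n : nat) (f : nat -> R) : R :=
  match n with
  | O => 0
  | S m => sumR m f + f m
  end.

Definition updR (f : nat -> R) (j : nat) (v : R) : nat -> R :=
  fun k => if Nat.eqb k j then v else f k.

Definition updN (f : nat -> nat) (j : nat) (v : nat) : nat -> nat :=
  fun k => if Nat.eqb k j then v else f k.

(* integer floor: up x is the unique integer with x < up x <= x + 1 *)
Definition floorZ (x : R) : Z := (up x - 1)%Z.

Definition log2 (x : R) : R := ln x / ln 2.

(** An offline schedule is a finite sequence of consecutive pieces starting at
   time 0; a piece (Some i, d) processes job i for d time units, (None, d) is
   idle time. *)

Definition offline_schedule := list (option nat * R).

Fixpoint off_proc (S : offline_schedule) (j : nat) : R :=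
  match S with
  | nil => 0
  | (o, d) :: S' =>
      match o with
      | Some i => if Nat.eqb i j then d + off_proc S' j else off_proc S' j
      | None => off_proc S' j
      end
  end.

(* completion time of job j; t = current time, r = processing of j so far *)
Fixpoint off_comp_aux (p : nat -> R) (S : offline_schedule) (t r : R) (j : nat)
  : R :=
  match S with
  | nil => 0
  | (o, d) :: S' =>
      match o with
      | Some i =>
          if Nat.eqb i j then
            if Rle_dec (p j) (r + d) then t + (p j - r)
            else off_comp_aux p S' (t + d) (r + d) j
          else off_comp_aux p S' (t + d) r j
      | None => off_comp_aux p S' (t + d) r j
      end
  end.

Definition off_comp (p : nat -> R) (S : offline_schedule) (j : nat) : R :=
  off_comp_aux p S 0 0 j.

Definition valid_offline (n : nat) (p : nat -> R) (S : offline_schedule) : Prop :=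
  (forall o d, In (o, d) S -> 0 <= d) /\
  (forall j, (j < n)%nat -> p j <= off_proc S j).

(** The family of FIFO queues (Q_k)_{k in Z} is represented by a single list of
   (level, job) pairs sorted by level: the concatenation Q_{k1} ++ Q_{k2} ++ ...
   for k1 < k2 < ...  Its head is the front job of the non-empty queue of
   lowest index.  Appending a job at the end of Q_l = inserting it after every
   entry of level <= l. *)

Fixpoint ins (e : Z * nat) (q : list (Z * nat)) : list (Z * nat) :=
  match q with
  | nil => e :: nil
  | e' :: q' => if Z.leb (fst e') (fst e) then e' :: ins e q' else e :: q
  end.

Record pstate := mkPState {
  ps_time  : R;
  ps_queue : list (Z * nat);
  ps_recv  : nat -> R;
  ps_comp  : nat -> R;
  ps_npre  : nat -> nat
}.

Section PMLF.
Variables (delta : R) (p phat : nat -> R).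

Definition init_level (j : nat) : Z := floorZ (ln (phat j) / ln (1 + delta)).

Definition threshold (i : Z) : R := powerRZ (1 + delta) (i + 1).

Definition pmlf_init (n : nat) : pstate :=
  mkPState 0
    (fold_left (fun q j => ins (init_level j, j) q) (seq 0 n) nil)
    (fun _ => 0) (fun _ => 0) (fun _ => O).

(* One event of PMLF: the front job j of the lowest non-empty queue Q_l is
   processed (uninterrupted, since no job arrives later) until it either
   completes or has received (1+delta)^(l+1) units, whichever comes first.
   In the latter case it is moved to the end of Q_(l+1); this is a
   preemption of j iff the machine then continues with another job. *)
Definition pmlf_step (s : pstate) : pstate :=
  match ps_queue s with
  | nil => s
  | (l, j) :: q =>
      let r := ps_recv s j in
      let thr := threshold l in
      if Rle_dec (p j) thr then
        mkPState (ps_time s + (p j - r)) q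
                 (updR (ps_recv s) j (p j))
                 (updR (ps_comp s) j (ps_time s + (p j - r)))
                 (ps_npre s)
      else
        let q' := ins (l + 1, j)%Z q in
        let continues := match q' with
                         | (_, j') :: _ => Nat.eqb j' j
                         | nil => false
                         end in
        mkPState (ps_time s + (thr - r)) q'
                 (updR (ps_recv s) j thr)
                 (ps_comp s)
                 (if continues then ps_npre s
                  else updN (ps_npre s) j (S (ps_npre s j)))
  end.

Definition pmlf_run (n k : nat) : pstate := Nat.iter k pmlf_step (pmlf_init n).

End PMLF.

(* A feasible offline schedule pays at least (1/2) sum_{j,k} min(p_j, p_k): along its pieces,
   the potential "current time for every unfinished job plus half the sum over pairs of the
   smaller remaining work" never exceeds the completion times still to come.

   For PMLF, each ordered pair (j, k) carries a charge which, while both are unfinished, is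
   the processing they have received, and twice the sum of projected completion times never
   exceeds the total charge.  Because predictions underestimate, a job in Q_l has
   p >= (1+delta)^l, so when job i completes no other job has received more than
   (1+delta) p_i; thus a finished pair is charged at most (2+2delta) min(p_j, p_k), and
   sum C_j <= (1+delta) sum_{j,k} min(p_j, p_k) <= (2+2delta) OPT.

   A job is preempted only when it moves up one level, from floor(log_{1+delta} phat_j) to at
   most floor(log_{1+delta} p_j). *)

From Stdlib Require Import Reals List ZArith Arith Lra Lia Sorting Permutation.
Open Scope R_scope.

Lemma sumR_ext n f g : (forall k, (k < n)%nat -> f k = g k) -> sumR n f = sumR n g.
Proof.
  induction n as [|n IH]; intros H; simpl; [reflexivity|].
  rewrite IH by (intros; apply H; lia). rewrite H by lia. reflexivity.
Qed.

Lemma sumR_le n f g : (forall k, (k < n)%nat -> f k <= g k) -> sumR n f <= sumR n g.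
Proof.
  induction n as [|n IH]; intros H; simpl; [lra|].
  assert (sumR n f <= sumR n g) by (apply IH; intros; apply H; lia).
  assert (f n <= g n) by (apply H; lia). lra.
Qed.

Lemma sumR_add n f g : sumR n (fun k => f k + g k) = sumR n f + sumR n g.
Proof. induction n as [|n IH]; simpl; [lra|]. rewrite IH. lra. Qed.

Lemma sumR_scal n c f : sumR n (fun k => c * f k) = c * sumR n f.
Proof. induction n as [|n IH]; simpl; [lra|]. rewrite IH. lra. Qed.

Lemma sumR_0 n : sumR n (fun _ => 0) = 0.
Proof. induction n as [|n IH]; simpl; [lra|]. rewrite IH. lra. Qed.

Lemma sumR_nonneg n f : (forall k, (k < n)%nat -> 0 <= f k) -> 0 <= sumR n f.
Proof. intros H. rewrite <- (sumR_0 n). apply sumR_le. exact H. Qed.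

Lemma sumR_indicator n i x :
  (i < n)%nat -> sumR n (fun k => if Nat.eqb k i then x else 0) = x.
Proof.
  induction n as [|n IH]; intros Hi; simpl; [lia|].
  destruct (Nat.eqb_spec n i) as [<-|Hni].
  - rewrite (sumR_ext n _ (fun _ => 0)), sumR_0; [lra|].
    intros k Hk. destruct (Nat.eqb_spec k n); [lia|reflexivity].
  - rewrite IH by lia. lra.
Qed.

Section OfflineLowerBound.
Variables (n : nat) (p : nat -> R).

Definition sumR_on (a : nat -> bool) (f : nat -> R) : R :=
  sumR n (fun k => if a k then f k else 0).

Definition unmark (a : nat -> bool) (i : nat) : nat -> bool :=
  fun k => if Nat.eqb k i then false else a k.

Lemma unmark_true a i k : unmark a i k = true -> k <> i /\ a k = true.
Proof. unfold unmark. destruct (Nat.eqb_spec k i); [discriminate|auto]. Qed.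

Lemma sumR_on_ext a f g :
  (forall k, (k < n)%nat -> a k = true -> f k = g k) -> sumR_on a f = sumR_on a g.
Proof.
  intros H. apply sumR_ext. intros k Hk. destruct (a k) eqn:E; auto.
Qed.

Lemma sumR_on_le a f g :
  (forall k, (k < n)%nat -> a k = true -> f k <= g k) -> sumR_on a f <= sumR_on a g.
Proof.
  intros H. apply sumR_le. intros k Hk. destruct (a k) eqn:E; auto. lra.
Qed.

Lemma sumR_on_add a f g : sumR_on a (fun k => f k + g k) = sumR_on a f + sumR_on a g.
Proof.
  unfold sumR_on. rewrite <- sumR_add. apply sumR_ext. intros k _. destruct (a k); lra.
Qed.

Lemma sumR_on_empty a f : (forall k, (k < n)%nat -> a k = false) -> sumR_on a f = 0.
Proof.
  intros H. rewrite <- (sumR_0 n). apply sumR_ext. intros k Hk. rewrite H by exact Hk. reflexivity.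
Qed.

Lemma sumR_on_unmark a f i :
  (i < n)%nat -> a i = true -> sumR_on a f = f i + sumR_on (unmark a i) f.
Proof.
  intros Hi Hai. unfold sumR_on. rewrite <- (sumR_indicator n i (f i) Hi) at 1.
  rewrite <- sumR_add. apply sumR_ext. intros k _. unfold unmark.
  destruct (Nat.eqb_spec k i) as [->|]; [rewrite Hai|]; lra.
Qed.

Lemma sumR_on_unmark2 a m i : (i < n)%nat -> a i = true ->
  sumR_on a (fun j => sumR_on a (m j)) =
  m i i + sumR_on (unmark a i) (m i) + sumR_on (unmark a i) (fun j => m j i)
  + sumR_on (unmark a i) (fun j => sumR_on (unmark a i) (m j)).
Proof.
  intros Hi Hai.
  rewrite (sumR_on_unmark a (fun j => sumR_on a (m j)) i Hi Hai),
    (sumR_on_unmark a (m i) i Hi Hai).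
  rewrite (sumR_on_ext (unmark a i) (fun j => sumR_on a (m j))
             (fun j => m j i + sumR_on (unmark a i) (m j)))
    by (intros; apply sumR_on_unmark; auto).
  rewrite sumR_on_add. lra.
Qed.

Definition min_remaining (r : nat -> R) (j k : nat) : R := Rmin (p j - r j) (p k - r k).

Definition offline_potential (t : R) (a : nat -> bool) (r : nat -> R) : R :=
  sumR_on a (fun _ => t) + / 2 * sumR_on a (fun j => sumR_on a (min_remaining r j)).

Definition unfinished (S : offline_schedule) (a : nat -> bool) (r : nat -> R) : Prop :=
  forall k, (k < n)%nat -> a k = true -> r k < p k /\ p k - r k <= off_proc S k.

(* Processing an unfinished job for [d] units ages every unfinished job by [d], which pays
   for the decrease of its [min_remaining] terms. *)
Definition bounds_potential (S : offline_schedule) : Prop :=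
  forall t a r, unfinished S a r ->
  offline_potential t a r <= sumR_on a (fun k => off_comp_aux p S t (r k) k).

Lemma bounds_potential_cons_other S o d t a r :
  0 <= d -> bounds_potential S ->
  (forall k, (k < n)%nat -> a k = true -> o <> Some k) ->
  unfinished ((o, d) :: S) a r ->
  offline_potential t a r <= sumR_on a (fun k => off_comp_aux p ((o, d) :: S) t (r k) k).
Proof.
  intros Hd IH Ho Hu.
  assert (Hskip : forall k, o <> Some k ->
    off_comp_aux p ((o, d) :: S) t (r k) k = off_comp_aux p S (t + d) (r k) k /\
    off_proc ((o, d) :: S) k = off_proc S k).
  { intros k Hk. destruct o as [i|]; simpl; [|auto].
    destruct (Nat.eqb_spec i k) as [->|]; [congruence|auto]. }
  rewrite (sumR_on_ext a _ (fun k => off_comp_aux p S (t + d) (r k) k))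
    by (intros k Hk Hak; apply Hskip, Ho; auto).
  apply Rle_trans with (offline_potential (t + d) a r).
  - unfold offline_potential.
    assert (sumR_on a (fun _ => t) <= sumR_on a (fun _ => t + d))
      by (apply sumR_on_le; intros; lra).
    lra.
  - apply IH. intros k Hk Hak. destruct (Hskip k (Ho k Hk Hak)) as [_ E].
    rewrite <- E. apply Hu; auto.
Qed.

Lemma offline_potential_complete t a r i d :
  (i < n)%nat -> a i = true -> r i < p i -> p i - r i <= d ->
  offline_potential t a r <= t + (p i - r i) + offline_potential (t + d) (unmark a i) r.
Proof.
  intros Hi Hai Hri Hd. unfold offline_potential.
  rewrite (sumR_on_unmark a (fun _ => t) i Hi Hai), (sumR_on_unmark2 a _ i Hi Hai),
    (sumR_on_add (unmark a i) (fun _ => t) (fun _ => d)).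
  assert (sumR_on (unmark a i) (min_remaining r i) <= sumR_on (unmark a i) (fun _ => d)).
  { apply sumR_on_le. intros k _ _. pose proof (Rmin_l (p i - r i) (p k - r k)).
    unfold min_remaining. lra. }
  assert (sumR_on (unmark a i) (fun j => min_remaining r j i)
          <= sumR_on (unmark a i) (fun _ => d)).
  { apply sumR_on_le. intros k _ _. pose proof (Rmin_r (p k - r k) (p i - r i)).
    unfold min_remaining. lra. }
  assert (min_remaining r i i = p i - r i) by (apply Rmin_left; lra).
  lra.
Qed.

Lemma offline_potential_partial t a r i d :
  (i < n)%nat -> a i = true -> 0 <= d -> r i + d < p i ->
  offline_potential t a r <= offline_potential (t + d) a (updR r i (r i + d)).
Proof.
  intros Hi Hai Hd Hc. set (r' := updR r i (r i + d)).
  assert (Er : forall k, k <> i -> r' k = r k).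
  { intros k Hk. unfold r', updR. destruct (Nat.eqb_spec k i); [lia|reflexivity]. }
  assert (Eri : r' i = r i + d) by (unfold r', updR; rewrite Nat.eqb_refl; reflexivity).
  unfold offline_potential.
  rewrite (sumR_on_unmark2 a (min_remaining r) i Hi Hai),
    (sumR_on_unmark2 a (min_remaining r') i Hi Hai),
    (sumR_on_add a (fun _ => t) (fun _ => d)), (sumR_on_unmark a (fun _ => d) i Hi Hai).
  assert (sumR_on (unmark a i) (fun j => sumR_on (unmark a i) (min_remaining r j)) =
          sumR_on (unmark a i) (fun j => sumR_on (unmark a i) (min_remaining r' j))).
  { apply sumR_on_ext. intros j _ Hj. apply sumR_on_ext. intros k _ Hk.
    apply unmark_true in Hj as [Hj _]. apply unmark_true in Hk as [Hk _].
    unfold min_remaining. rewrite !Er by assumption. reflexivity. }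
  assert (sumR_on (unmark a i) (min_remaining r i)
          <= sumR_on (unmark a i) (min_remaining r' i) + sumR_on (unmark a i) (fun _ => d)).
  { rewrite <- sumR_on_add. apply sumR_on_le. intros k _ Hk. apply unmark_true in Hk as [Hk _].
    unfold min_remaining. rewrite Eri, Er by assumption. unfold Rmin.
    destruct (Rle_dec (p i - r i) (p k - r k)), (Rle_dec (p i - (r i + d)) (p k - r k)); lra. }
  assert (sumR_on (unmark a i) (fun j => min_remaining r j i)
          <= sumR_on (unmark a i) (fun j => min_remaining r' j i)
             + sumR_on (unmark a i) (fun _ => d)).
  { rewrite <- sumR_on_add. apply sumR_on_le. intros k _ Hk. apply unmark_true in Hk as [Hk _].
    unfold min_remaining. rewrite Eri, Er by assumption. unfold Rmin.
    destruct (Rle_dec (p k - r k) (p i - r i)), (Rle_dec (p k - r k) (p i - (r i + d))); lra. }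
  assert (min_remaining r i i = p i - r i) by (apply Rmin_left; lra).
  assert (min_remaining r' i i = p i - (r i + d))
    by (unfold min_remaining; rewrite Eri; apply Rmin_left; lra).
  lra.
Qed.

Lemma bounds_potential_cons_complete S i d t a r :
  (i < n)%nat -> bounds_potential S -> a i = true -> p i <= r i + d ->
  unfinished ((Some i, d) :: S) a r ->
  offline_potential t a r <= sumR_on a (fun k => off_comp_aux p ((Some i, d) :: S) t (r k) k).
Proof.
  intros Hi IH Hai Hc Hu. destruct (Hu i Hi Hai) as [Hri _].
  rewrite (sumR_on_unmark a _ i Hi Hai).
  replace (off_comp_aux p ((Some i, d) :: S) t (r i) i) with (t + (p i - r i)) by
    (simpl; rewrite Nat.eqb_refl; destruct (Rle_dec (p i) (r i + d)); [reflexivity|contradiction]).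
  rewrite (sumR_on_ext (unmark a i) _ (fun k => off_comp_aux p S (t + d) (r k) k)).
  2:{ intros k _ Hk. apply unmark_true in Hk as [Hki _]. simpl.
      destruct (Nat.eqb_spec i k); [lia|reflexivity]. }
  eapply Rle_trans; [apply (offline_potential_complete t a r i d); auto; lra|].
  apply Rplus_le_compat_l, IH. intros k Hk Hk'. apply unmark_true in Hk' as [Hki Hak].
  destruct (Hu k Hk Hak) as [Hrk Hpk]. split; [exact Hrk|].
  simpl in Hpk. destruct (Nat.eqb_spec i k); [lia|exact Hpk].
Qed.

Lemma bounds_potential_cons_partial S i d t a r :
  (i < n)%nat -> 0 <= d -> bounds_potential S -> a i = true -> r i + d < p i ->
  unfinished ((Some i, d) :: S) a r ->
  offline_potential t a r <= sumR_on a (fun k => off_comp_aux p ((Some i, d) :: S) t (r k) k).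
Proof.
  intros Hi Hd IH Hai Hc Hu. set (r' := updR r i (r i + d)).
  rewrite (sumR_on_ext a _ (fun k => off_comp_aux p S (t + d) (r' k) k)).
  2:{ intros k _ _. unfold r', updR. simpl. destruct (Nat.eqb_spec i k) as [<-|Hik].
      - rewrite Nat.eqb_refl. destruct (Rle_dec (p i) (r i + d)); [lra|reflexivity].
      - destruct (Nat.eqb_spec k i); [congruence|reflexivity]. }
  eapply Rle_trans; [apply (offline_potential_partial t a r i d); assumption|].
  apply IH. intros k Hk Hak. destruct (Hu k Hk Hak) as [Hrk Hpk]. simpl in Hpk.
  unfold r', updR. destruct (Nat.eqb_spec k i) as [->|Hki].
  - rewrite Nat.eqb_refl in Hpk. split; lra.
  - destruct (Nat.eqb_spec i k); [congruence|]. auto.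
Qed.

Lemma bounds_potential_of_nonneg S : (forall o d, In (o, d) S -> 0 <= d) -> bounds_potential S.
Proof.
  induction S as [|[o d] S IH]; intros Hd t a r Hu.
  - assert (Hnone : forall k, (k < n)%nat -> a k = false).
    { intros k Hk. destruct (a k) eqn:E; [|reflexivity]. destruct (Hu k Hk E). simpl in *. lra. }
    unfold offline_potential. rewrite !(sumR_on_empty a _ Hnone). lra.
  - assert (Hd0 : 0 <= d) by (apply (Hd o); left; reflexivity).
    assert (IH' : bounds_potential S) by (apply IH; intros; eapply Hd; right; eauto).
    destruct o as [i|]; [|apply bounds_potential_cons_other; auto; congruence].
    destruct (lt_dec i n) as [Hi|Hi]; [destruct (a i) eqn:Hai|].
    + destruct (Rle_dec (p i) (r i + d)).
      * apply bounds_potential_cons_complete; auto.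
      * apply bounds_potential_cons_partial; auto. lra.
    + apply bounds_potential_cons_other; auto. intros k _ Hak [= ->]. congruence.
    + apply bounds_potential_cons_other; auto. intros k Hk _ [= ->]. lia.
Qed.

Lemma offline_lower_bound S : valid_offline n p S -> (forall j, (j < n)%nat -> 0 < p j) ->
  / 2 * sumR n (fun j => sumR n (fun k => Rmin (p j) (p k))) <= sumR n (off_comp p S).
Proof.
  intros [Hd Hp] Hpos.
  assert (L : offline_potential 0 (fun _ => true) (fun _ => 0)
              <= sumR_on (fun _ => true) (fun k => off_comp_aux p S 0 0 k)).
  { apply bounds_potential_of_nonneg; [exact Hd|]. intros k Hk _.
    specialize (Hp k Hk). specialize (Hpos k Hk). split; lra. }
  unfold offline_potential, sumR_on, min_remaining in L. cbv beta iota in L.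
  rewrite sumR_0, (sumR_ext n _ (fun j => sumR n (fun k => Rmin (p j) (p k)))) in L.
  - unfold off_comp. lra.
  - intros j _. apply sumR_ext. intros k _. rewrite !Rminus_0_r. reflexivity.
Qed.

End OfflineLowerBound.

Ltac Rmin_cases := repeat match goal with |- context [Rmin ?x ?y] =>
  let H := fresh in unfold Rmin at 1; destruct (Rle_dec x y) as [H|H] end.

Section PairPotential.
Variables (delta : R) (p : nat -> R) (n : nat).
Hypothesis delta_pos : 0 < delta.
Hypothesis p_nonneg : forall j, (j < n)%nat -> 0 <= p j.

(* [a] marks the unfinished jobs and [rc] their received processing; the charge of a pair
   bounds the delay its two jobs have caused each other. *)
Definition pair_potential (a : nat -> bool) (rc : nat -> R) (j k : nat) : R :=
  if a j then
    if a k then rc j + rc k else p k + Rmin (rc j) ((1 + delta) * p k)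
  else
    if a k then p j + Rmin (rc k) ((1 + delta) * p j) else (2 + 2 * delta) * Rmin (p j) (p k).

Lemma pair_potential_complete a a' rc i j k :
  (i < n)%nat -> (j < n)%nat -> (k < n)%nat -> a i = true ->
  (forall l, a' l = unmark a i l) ->
  (forall l, (l < n)%nat -> a l = true -> rc l <= (1 + delta) * p i) ->
  (forall l, (l < n)%nat -> a l = false -> p l <= (1 + delta) * p i) ->
  pair_potential a rc j k + (if Nat.eqb j i then if a k then p i - rc i else 0 else 0)
    + (if Nat.eqb k i then if a j then p i - rc i else 0 else 0)
  <= pair_potential a' (updR rc i (p i)) j k.
Proof.
  intros Hi Hj Hk Hai Ha' Hrun Hdone.
  pose proof (p_nonneg i Hi). pose proof (p_nonneg j Hj). pose proof (p_nonneg k Hk).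
  assert (0 <= delta * p i) by (apply Rmult_le_pos; lra).
  pose proof (Hrun i Hi Hai).
  unfold pair_potential, updR. rewrite !Ha'. unfold unmark.
  destruct (Nat.eqb_spec j i) as [->|]; destruct (Nat.eqb_spec k i) as [->|]; rewrite ?Hai.
  - rewrite Rmin_left; lra.
  - destruct (a k) eqn:Ek; [pose proof (Hrun k Hk Ek)|pose proof (Hdone k Hk Ek)]; Rmin_cases; nra.
  - destruct (a j) eqn:Ej; [pose proof (Hrun j Hj Ej)|pose proof (Hdone j Hj Ej)]; Rmin_cases; nra.
  - lra.
Qed.

Lemma pair_potential_promote a rc i j k thr :
  a i = true -> rc i <= thr ->
  pair_potential a rc j k + (if Nat.eqb j i then if a k then thr - rc i else 0 else 0)
    + (if Nat.eqb k i then if a j then thr - rc i else 0 else 0)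
  <= pair_potential a (updR rc i thr) j k.
Proof.
  intros Hai Hr. unfold pair_potential, updR.
  destruct (Nat.eqb_spec j i) as [->|]; destruct (Nat.eqb_spec k i) as [->|]; rewrite ?Hai.
  - lra.
  - destruct (a k); Rmin_cases; lra.
  - destruct (a j); Rmin_cases; lra.
  - lra.
Qed.
End PairPotential.

(* Running job [i] for [d] units postpones every unfinished job by [d]; this is paid for when
   every pair of [i] with an unfinished job gains [d]. *)
Lemma potential_step n (a a' : nat -> bool) (t t' d : R) (C C' : nat -> R)
  (B B' : nat -> nat -> R) i :
  (i < n)%nat ->
  (forall k, (k < n)%nat ->
     (if a' k then t' else C' k) = (if a k then t else C k) + (if a k then d else 0)) ->
  (forall j k, (j < n)%nat -> (k < n)%nat ->
     B j k + (if Nat.eqb j i then if a k then d else 0 else 0)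
       + (if Nat.eqb k i then if a j then d else 0 else 0) <= B' j k) ->
  2 * sumR n (fun k => if a k then t else C k) <= sumR n (fun j => sumR n (B j)) ->
  2 * sumR n (fun k => if a' k then t' else C' k) <= sumR n (fun j => sumR n (B' j)).
Proof.
  intros Hi HC HB H.
  rewrite (sumR_ext n _ _ HC), sumR_add.
  set (D := sumR n (fun k => if a k then d else 0)).
  assert (L : sumR n (fun j => sumR n (fun k =>
                B j k + (if Nat.eqb j i then if a k then d else 0 else 0)
                + (if Nat.eqb k i then if a j then d else 0 else 0)))
              <= sumR n (fun j => sumR n (B' j))).
  { apply sumR_le. intros j Hj. apply sumR_le. intros k Hk. apply HB; assumption. }
  rewrite (sumR_ext n _ (fun j => sumR n (B j) + (if Nat.eqb j i then D else 0)
                                  + (if a j then d else 0))) in L.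
  2:{ intros j _. rewrite !sumR_add, sumR_indicator by exact Hi.
      destruct (Nat.eqb j i); [reflexivity|]. rewrite sumR_0. reflexivity. }
  rewrite !sumR_add, sumR_indicator in L by exact Hi. fold D in L. lra.
Qed.

Definition queued (q : list (Z * nat)) (k : nat) : bool :=
  existsb (fun e => Nat.eqb (snd e) k) q.

Lemma queued_spec q k : queued q k = true <-> In k (map snd q).
Proof.
  unfold queued. rewrite existsb_exists, in_map_iff.
  split; intros [e [H1 H2]]; exists e.
  - split; [apply Nat.eqb_eq|]; assumption.
  - split; [|apply Nat.eqb_eq]; assumption.
Qed.

Lemma queued_perm q q' k : Permutation q q' -> queued q k = queued q' k.
Proof.
  intros P. apply Bool.eq_iff_eq_true. rewrite !queued_spec.
  split; apply Permutation_in; [|symmetry]; apply Permutation_map; exact P.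
Qed.

Definition level_sorted : list (Z * nat) -> Prop :=
  StronglySorted (fun e e' => (fst e <= fst e')%Z).

Lemma ins_perm e q : Permutation (ins e q) (e :: q).
Proof.
  induction q as [|e' q IH]; simpl; [reflexivity|].
  destruct (Z.leb (fst e') (fst e)); [|reflexivity].
  rewrite IH. apply perm_swap.
Qed.

Lemma ins_sorted e q : level_sorted q -> level_sorted (ins e q).
Proof.
  unfold level_sorted. induction q as [|e' q IH]; simpl; intros H.
  - repeat constructor.
  - inversion H as [|? ? Hq Hf]; subst. rewrite Forall_forall in Hf.
    destruct (Z.leb_spec (fst e') (fst e)).
    + constructor; [auto|]. rewrite Forall_forall. intros x Hx.
      apply (Permutation_in _ (ins_perm e q)) in Hx as [<-|Hx]; auto.
    + constructor; [exact H|]. constructor; [lia|]. rewrite Forall_forall.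
      intros x Hx. specialize (Hf x Hx). lia.
Qed.

Lemma floorZ_le x : IZR (floorZ x) <= x.
Proof. unfold floorZ. rewrite minus_IZR. destruct (archimed x). lra. Qed.

Lemma floorZ_gt x : x - 1 < IZR (floorZ x).
Proof. unfold floorZ. rewrite minus_IZR. destruct (archimed x). lra. Qed.

Lemma floorZ_greatest z x : IZR z <= x -> (z <= floorZ x)%Z.
Proof.
  intros H. unfold floorZ. destruct (archimed x).
  assert (IZR z < IZR (up x)) as Hlt by lra. apply lt_IZR in Hlt. lia.
Qed.

Lemma powerRZ_le_iff b y z : 1 < b -> 0 < y -> powerRZ b z <= y <-> IZR z <= ln y / ln b.
Proof.
  intros Hb Hy. assert (Hlb : 0 < ln b) by (rewrite <- ln_1; apply ln_increasing; lra).
  assert (E : ln y / ln b * ln b = ln y) by (field; lra).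
  rewrite powerRZ_Rpower by lra. unfold Rpower. split; intros H.
  - apply Rmult_le_reg_r with (ln b); [exact Hlb|]. rewrite E.
    destruct (Rle_or_lt (IZR z * ln b) (ln y)) as [|Hlt]; [assumption|].
    apply exp_increasing in Hlt. rewrite exp_ln in Hlt by exact Hy. lra.
  - apply (Rmult_le_compat_r (ln b)) in H; [|lra]. rewrite E in H.
    rewrite <- (exp_ln y) by exact Hy.
    destruct (Rle_lt_or_eq_dec _ _ H) as [Hlt|Heq]; [left; apply exp_increasing; lra|].
    rewrite Heq. lra.
Qed.

Lemma in_ins e e' q : In e' (ins e q) <-> e' = e \/ In e' q.
Proof.
  split; intros H.
  - apply (Permutation_in _ (ins_perm e q)) in H as [<-|H]; auto.
  - apply (Permutation_in _ (Permutation_sym (ins_perm e q))).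
    destruct H as [<-|H]; [left|right]; auto.
Qed.

Lemma queued_ins e q k : queued (ins e q) k = queued (e :: q) k.
Proof. apply queued_perm, ins_perm. Qed.

Section PMLFInvariant.
Variables (delta : R) (p phat : nat -> R) (n : nat).
Hypothesis delta_pos : 0 < delta.
Hypothesis p_ge1 : forall j, (j < n)%nat -> 1 <= p j.
Hypothesis phat_pos : forall j, (j < n)%nat -> 0 < phat j.
Hypothesis phat_le_p : forall j, (j < n)%nat -> phat j <= p j.

Definition final_level (k : nat) : Z := floorZ (ln (p k) / ln (1 + delta)).

Definition projected_total (s : pstate) : R :=
  sumR n (fun k => if queued (ps_queue s) k then ps_time s else ps_comp s k).

Definition pair_total (s : pstate) : R :=
  sumR n (fun j => sumR n (pair_potential delta p (queued (ps_queue s)) (ps_recv s) j)).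

Record pmlf_inv (s : pstate) : Prop := {
  inv_index : forall e, In e (ps_queue s) -> (snd e < n)%nat;
  inv_nodup : NoDup (map snd (ps_queue s));
  inv_sorted : level_sorted (ps_queue s);
  inv_recv : forall e e', In e (ps_queue s) -> In e' (ps_queue s) ->
    ps_recv s (snd e) <= threshold delta (fst e');
  (* Holds initially because [phat <= p], and a job leaves [Q_l] only once it has received
     [(1 + delta) ^ (l + 1) < p]. *)
  inv_level : forall e, In e (ps_queue s) -> powerRZ (1 + delta) (fst e) <= p (snd e);
  inv_done : forall j k, (j < n)%nat -> queued (ps_queue s) j = false ->
    queued (ps_queue s) k = true -> p j <= (1 + delta) * p k;
  inv_npre_queued : forall e, In e (ps_queue s) ->
    INR (ps_npre s (snd e)) <= IZR (fst e - init_level delta phat (snd e));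
  inv_npre : forall k, (k < n)%nat ->
    INR (ps_npre s k) <= IZR (final_level k - init_level delta phat k);
  inv_potential : 2 * projected_total s <= pair_total s }.

Lemma powerRZ_mono z1 z2 : (z1 <= z2)%Z -> powerRZ (1 + delta) z1 <= powerRZ (1 + delta) z2.
Proof. intros H. rewrite !powerRZ_Rpower by lra. apply Rle_Rpower; [lra|apply IZR_le, H]. Qed.

Lemma threshold_eq h : threshold delta h = powerRZ (1 + delta) h * (1 + delta).
Proof. unfold threshold. rewrite powerRZ_add by lra. simpl. ring. Qed.

Lemma threshold_mono h h' : (h <= h')%Z -> threshold delta h <= threshold delta h'.
Proof. intros H. apply powerRZ_mono. lia. Qed.

Lemma le_final_level k l : 0 < p k -> powerRZ (1 + delta) l <= p k -> (l <= final_level k)%Z.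
Proof. intros Hp H. apply floorZ_greatest, powerRZ_le_iff; auto; lra. Qed.

Lemma init_level_le k : 0 < phat k -> powerRZ (1 + delta) (init_level delta phat k) <= phat k.
Proof. intros Hp. apply powerRZ_le_iff; [lra|exact Hp|apply floorZ_le]. Qed.

Section FrontJob.
Variables (t : R) (h : Z) (i : nat) (q : list (Z * nat)) (rc cp : nat -> R) (np : nat -> nat).
Hypothesis I : pmlf_inv (mkPState t ((h, i) :: q) rc cp np).

Lemma front_index : (i < n)%nat.
Proof. apply (inv_index _ I (h, i)). left. reflexivity. Qed.

Lemma front_not_in_tail e : In e q -> snd e <> i.
Proof.
  intros He Hei. pose proof (inv_nodup _ I) as Hnd. simpl in Hnd. inversion Hnd as [|? ? Hni].
  apply Hni. rewrite <- Hei. apply in_map, He.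
Qed.

Lemma front_not_queued_tail : queued q i = false.
Proof.
  destruct (queued q i) eqn:E; [|reflexivity].
  apply queued_spec, in_map_iff in E as [e [Hei He]]. contradiction (front_not_in_tail e He Hei).
Qed.

Lemma front_level_min e : In e q -> (h <= fst e)%Z.
Proof.
  intros He. pose proof (inv_sorted _ I) as Hs. inversion Hs as [|? ? _ Hf].
  rewrite Forall_forall in Hf. apply (Hf e He).
Qed.

Lemma front_recv k : queued ((h, i) :: q) k = true -> rc k <= threshold delta h.
Proof.
  intros Hk. apply queued_spec, in_map_iff in Hk as [e [<- He]].
  apply (inv_recv _ I e (h, i) He). left. reflexivity.
Qed.

Lemma front_threshold : threshold delta h <= (1 + delta) * p i.
Proof.
  pose proof (inv_level _ I (h, i) (or_introl eq_refl)). simpl in *.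
  rewrite threshold_eq. nra.
Qed.

Lemma queued_front k : queued ((h, i) :: q) k = Nat.eqb i k || queued q k.
Proof. reflexivity. Qed.

Lemma complete_potential :
  let s := mkPState (t + (p i - rc i)) q (updR rc i (p i)) (updR cp i (t + (p i - rc i))) np in
  2 * projected_total s <= pair_total s.
Proof.
  intros s. pose proof front_index as Hi.
  unfold s, projected_total, pair_total. cbn [ps_queue ps_recv ps_time ps_comp].
  apply (potential_step n (queued ((h, i) :: q)) (queued q) t _ (p i - rc i) cp _
           (pair_potential delta p (queued ((h, i) :: q)) rc) _ i Hi);
    [| |exact (inv_potential _ I)].
  - intros k _. rewrite queued_front. unfold updR. cbv beta.
    destruct (Nat.eqb_spec k i) as [->|Hki].
    + rewrite !Nat.eqb_refl, front_not_queued_tail. simpl. lra.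
    + destruct (Nat.eqb_spec i k); [congruence|]. simpl. destruct (queued q k); lra.
  - intros j k Hj Hk. apply pair_potential_complete with n; auto.
    + intros l Hl. pose proof (p_ge1 l Hl). lra.
    + rewrite queued_front, Nat.eqb_refl. reflexivity.
    + intros l. unfold unmark. rewrite queued_front.
      destruct (Nat.eqb_spec l i) as [->|]; [apply front_not_queued_tail|].
      destruct (Nat.eqb_spec i l); [congruence|reflexivity].
    + intros l _ Hl. pose proof (front_recv l Hl). pose proof front_threshold. lra.
    + intros l Hl Hq. apply (inv_done _ I); auto. rewrite queued_front, Nat.eqb_refl. reflexivity.
Qed.

Lemma complete_inv : p i <= threshold delta h ->
  pmlf_inv (mkPState (t + (p i - rc i)) q (updR rc i (p i))
                     (updR cp i (t + (p i - rc i))) np).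
Proof.
  intros Hc. pose proof I as [Hidx Hnd Hsort Hrecv Hlev Hdone Hnpq Hnp _].
  cbn [ps_queue ps_recv ps_time ps_comp ps_npre] in *.
  split; cbn [ps_queue ps_recv ps_time ps_comp ps_npre].
  - intros e He. apply Hidx. right. exact He.
  - inversion Hnd. assumption.
  - inversion Hsort. assumption.
  - intros e e' He He'. unfold updR.
    destruct (Nat.eqb_spec (snd e) i) as [Hei|]; [contradiction (front_not_in_tail e He Hei)|].
    apply Hrecv; right; assumption.
  - intros e He. apply Hlev. right. exact He.
  - intros j k Hj Hjq Hkq. destruct (Nat.eqb_spec j i) as [->|Hji].
    + apply queued_spec, in_map_iff in Hkq as [e [<- He]].
      pose proof (powerRZ_mono _ _ (front_level_min e He)).
      pose proof (Hlev e (or_intror He)). rewrite threshold_eq in Hc. nra.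
    + apply Hdone; [exact Hj| |].
      * rewrite queued_front, Hjq. destruct (Nat.eqb_spec i j); [congruence|reflexivity].
      * rewrite queued_front, Hkq. apply Bool.orb_true_r.
  - intros e He. apply Hnpq. right. exact He.
  - exact Hnp.
  - apply complete_potential.
Qed.

Lemma promote_potential np' : threshold delta h < p i ->
  let s := mkPState (t + (threshold delta h - rc i)) (ins (h + 1, i)%Z q)
                    (updR rc i (threshold delta h)) cp np' in
  2 * projected_total s <= pair_total s.
Proof.
  intros Hc s. unfold s, projected_total, pair_total. cbn [ps_queue ps_recv ps_time ps_comp].
  assert (Hq : forall k, queued (ins (h + 1, i)%Z q) k = queued ((h, i) :: q) k)
    by (intros; rewrite queued_ins; reflexivity).
  apply (potential_step n (queued ((h, i) :: q)) _ t _ (threshold delta h - rc i) cp cp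
           (pair_potential delta p (queued ((h, i) :: q)) rc) _ i front_index);
    [| |exact (inv_potential _ I)].
  - intros k _. rewrite Hq. destruct (queued ((h, i) :: q) k); lra.
  - intros j k _ _.
    replace (pair_potential delta p (queued (ins (h + 1, i)%Z q))
                            (updR rc i (threshold delta h)) j k)
      with (pair_potential delta p (queued ((h, i) :: q)) (updR rc i (threshold delta h)) j k)
      by (unfold pair_potential; rewrite !Hq; reflexivity).
    apply pair_potential_promote.
    + rewrite queued_front, Nat.eqb_refl. reflexivity.
    + apply front_recv. rewrite queued_front, Nat.eqb_refl. reflexivity.
Qed.

Lemma promote_inv np' : threshold delta h < p i ->
  (forall k, k <> i -> np' k = np k) -> (np' i <= S (np i))%nat ->
  pmlf_inv (mkPState (t + (threshold delta h - rc i)) (ins (h + 1, i)%Z q)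
                     (updR rc i (threshold delta h)) cp np').
Proof.
  intros Hc Hnp_other Hnp_i. pose proof front_index as Hi.
  pose proof I as [Hidx Hnd Hsort Hrecv Hlev Hdone Hnpq Hnp _].
  cbn [ps_queue ps_recv ps_time ps_comp ps_npre] in *.
  assert (Hup : (h + 1 <= final_level i)%Z).
  { apply le_final_level; [pose proof (p_ge1 i Hi)|unfold threshold in Hc]; lra. }
  pose proof (Hnpq (h, i) (or_introl eq_refl)) as Hnpi. simpl in Hnpi.
  apply le_INR in Hnp_i. rewrite S_INR in Hnp_i.
  split; cbn [ps_queue ps_recv ps_time ps_comp ps_npre].
  - intros e He. apply in_ins in He as [->|He]; [exact Hi|apply Hidx; right; exact He].
  - apply (Permutation_NoDup (Permutation_map snd (Permutation_sym (ins_perm _ _)))). exact Hnd.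
  - apply ins_sorted. inversion Hsort. assumption.
  - intros e e' He He'.
    assert (Hh : (h <= fst e')%Z).
    { apply in_ins in He' as [->|He']; [simpl; lia|apply front_level_min, He']. }
    unfold updR. destruct (Nat.eqb_spec (snd e) i) as [|Hei]; [apply threshold_mono, Hh|].
    apply in_ins in He as [->|He]; [contradiction|].
    apply in_ins in He' as [->|He']; [|apply Hrecv; right; assumption].
    apply Rle_trans with (threshold delta h).
    + apply (Hrecv e (h, i)); [right|left]; auto.
    + apply threshold_mono. simpl. lia.
  - intros e He. apply in_ins in He as [->|He]; [unfold threshold in Hc; simpl; lra|].
    apply Hlev. right. exact He.
  - intros j k Hj. rewrite !queued_ins. apply Hdone, Hj.
  - intros e He. apply in_ins in He as [->|He].
    + simpl. rewrite minus_IZR, plus_IZR. rewrite minus_IZR in Hnpi. lra.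
    + rewrite Hnp_other by (apply front_not_in_tail, He). apply Hnpq. right. exact He.
  - intros k Hk. destruct (Nat.eq_dec k i) as [->|Hki].
    + apply IZR_le in Hup. rewrite plus_IZR in Hup. rewrite minus_IZR in *. lra.
    + rewrite Hnp_other by exact Hki. apply Hnp, Hk.
  - apply promote_potential, Hc.
Qed.

End FrontJob.

Lemma step_inv s : pmlf_inv s -> pmlf_inv (pmlf_step delta p s).
Proof.
  intros Hs. destruct s as [t [|[h i] q] rc cp np]; [exact Hs|].
  unfold pmlf_step. cbn [ps_queue ps_recv ps_time ps_comp ps_npre].
  destruct (Rle_dec (p i) (threshold delta h)) as [Hc|Hc]; [eapply complete_inv; eassumption|].
  apply promote_inv with (np := np); [exact Hs|apply Rnot_le_lt, Hc| |];
    match goal with |- context [if ?c then np else _] => destruct c end; unfold updN.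
  - reflexivity.
  - intros k Hk. destruct (Nat.eqb_spec k i); [contradiction|reflexivity].
  - lia.
  - rewrite Nat.eqb_refl. lia.
Qed.

Lemma fold_ins_perm (f : nat -> Z * nat) l q :
  Permutation (fold_left (fun q j => ins (f j) q) l q) (map f l ++ q).
Proof.
  revert q. induction l as [|j l IH]; intros q; simpl; [reflexivity|].
  rewrite IH, ins_perm. symmetry. apply Permutation_middle.
Qed.

Lemma fold_ins_sorted (f : nat -> Z * nat) l q :
  level_sorted q -> level_sorted (fold_left (fun q j => ins (f j) q) l q).
Proof.
  revert q. induction l as [|j l IH]; intros q Hq; simpl; [exact Hq|]. apply IH, ins_sorted, Hq.
Qed.

Lemma init_inv : pmlf_inv (pmlf_init delta phat n).
Proof.
  set (f := fun j => (init_level delta phat j, j)).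
  assert (HP : Permutation (ps_queue (pmlf_init delta phat n)) (map f (seq 0 n))).
  { rewrite <- (app_nil_r (map f (seq 0 n))). apply (fold_ins_perm f). }
  assert (Hsnd : map snd (map f (seq 0 n)) = seq 0 n) by (rewrite map_map; apply map_id).
  assert (Hin : forall e, In e (ps_queue (pmlf_init delta phat n)) ->
                  exists j, (j < n)%nat /\ e = f j).
  { intros e He. apply (Permutation_in _ HP), in_map_iff in He as [j [<- Hj]].
    apply in_seq in Hj. exists j. split; [lia|reflexivity]. }
  assert (Hq : forall k, (k < n)%nat -> queued (ps_queue (pmlf_init delta phat n)) k = true).
  { intros k Hk. apply queued_spec, (Permutation_in _ (Permutation_map snd (Permutation_sym HP))).
    rewrite Hsnd. apply in_seq. lia. }
  assert (Hinit : forall k, (k < n)%nat -> powerRZ (1 + delta) (init_level delta phat k) <= p k).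
  { intros k Hk. pose proof (init_level_le k (phat_pos k Hk)). pose proof (phat_le_p k Hk). lra. }
  split.
  - intros e He. destruct (Hin e He) as [j [Hj ->]]. exact Hj.
  - apply (Permutation_NoDup (Permutation_map snd (Permutation_sym HP))).
    rewrite Hsnd. apply seq_NoDup.
  - apply (fold_ins_sorted f). constructor.
  - intros e e' _ _. left. apply powerRZ_lt. lra.
  - intros e He. destruct (Hin e He) as [j [Hj ->]]. apply Hinit, Hj.
  - intros j k Hj Hjq _. rewrite Hq in Hjq by exact Hj. discriminate.
  - intros e He. destruct (Hin e He) as [j [Hj ->]]. simpl. rewrite Z.sub_diag. simpl. lra.
  - intros k Hk. simpl. apply IZR_le.
    assert (init_level delta phat k <= final_level k)%Z.
    { apply le_final_level; [pose proof (p_ge1 k Hk); lra|apply Hinit, Hk]. }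
    lia.
  - unfold projected_total, pair_total.
    rewrite (sumR_ext n _ (fun _ => 0)), sumR_0.
    2:{ intros k _. destruct (queued _ k); reflexivity. }
    rewrite Rmult_0_r. apply sumR_nonneg. intros j Hj. apply sumR_nonneg. intros k Hk.
    unfold pair_potential. rewrite !Hq by assumption. simpl. lra.
Qed.

Lemma pmlf_run_inv N : pmlf_inv (pmlf_run delta p phat n N).
Proof.
  induction N as [|N IH]; [exact init_inv|].
  unfold pmlf_run. rewrite Nat.iter_succ. apply step_inv, IH.
Qed.

(* Each event either removes a job or moves it up one level, never above its final level. *)
Definition queue_measure (q : list (Z * nat)) : nat :=
  list_sum (map (fun e => S (Z.to_nat (final_level (snd e) - fst e))) q).

Lemma queue_measure_step s : pmlf_inv s -> ps_queue s <> nil ->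
  (queue_measure (ps_queue (pmlf_step delta p s)) < queue_measure (ps_queue s))%nat.
Proof.
  intros Hs Hne. destruct s as [t [|[h i] q] rc cp np]; [contradiction|].
  pose proof (front_index t h i q rc cp np Hs) as Hi.
  unfold pmlf_step. cbn [ps_queue ps_recv ps_time ps_comp ps_npre].
  destruct (Rle_dec (p i) (threshold delta h)) as [Hc|Hc]; unfold queue_measure; simpl; [lia|].
  rewrite (Permutation_list_sum (Permutation_map _ (ins_perm _ _))). simpl.
  assert (h + 1 <= final_level i)%Z.
  { apply le_final_level; [pose proof (p_ge1 i Hi)|unfold threshold in Hc]; lra. }
  lia.
Qed.

Lemma pmlf_terminates : exists N, ps_queue (pmlf_run delta p phat n N) = nil.
Proof.
  enough (H : forall m N, queue_measure (ps_queue (pmlf_run delta p phat n N)) = m ->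
                exists N', ps_queue (pmlf_run delta p phat n N') = nil)
    by exact (H _ 0%nat eq_refl).
  intros m. induction m as [m IH] using lt_wf_ind. intros N Hm.
  case_eq (ps_queue (pmlf_run delta p phat n N)); [intros E; exists N; exact E|intros e q E].
  apply (IH (queue_measure (ps_queue (pmlf_run delta p phat n (S N))))) with (S N); [|reflexivity].
  rewrite <- Hm. unfold pmlf_run at 1. rewrite Nat.iter_succ.
  apply queue_measure_step; [apply pmlf_run_inv|congruence].
Qed.

Lemma pmlf_final_bound s : pmlf_inv s -> ps_queue s = nil ->
  sumR n (ps_comp s) <= (1 + delta) * sumR n (fun j => sumR n (fun k => Rmin (p j) (p k))).
Proof.
  intros Hs Hnil. pose proof (inv_potential _ Hs) as H.
  unfold projected_total, pair_total, pair_potential in H. rewrite Hnil in H. simpl in H.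
  rewrite (sumR_ext n (fun j => sumR n (fun k => (2 + 2 * delta) * Rmin (p j) (p k)))
                     (fun j => (2 + 2 * delta) * sumR n (fun k => Rmin (p j) (p k)))),
    sumR_scal in H by (intros; apply sumR_scal).
  change (sumR n (ps_comp s)) with (sumR n (fun k => ps_comp s k)). lra.
Qed.

End PMLFInvariant.

(* The gap is at most [1 + ln (x / y) / ln (1 + delta)]; the right-hand side is this plus two
   nonnegative terms. *)
Lemma level_gap_le_log delta x y : 0 < delta -> 0 < y -> y <= x ->
  IZR (floorZ (ln x / ln (1 + delta)) - floorZ (ln y / ln (1 + delta)))
  <= (1 + delta * ln 2 / ln (1 + delta)) * (1 + / delta * log2 (x / y)).
Proof.
  intros Hd Hy Hyx.
  assert (Hl : 0 < ln (1 + delta)) by (rewrite <- ln_1; apply ln_increasing; lra).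
  assert (Hl2 : 0 < ln 2) by (rewrite <- ln_1; apply ln_increasing; lra).
  assert (Hgap : 0 <= ln x - ln y).
  { destruct (Rle_lt_or_eq_dec _ _ Hyx) as [Hlt|<-]; [apply ln_increasing in Hlt|]; lra. }
  assert (Hlog : log2 (x / y) = (ln x - ln y) / ln 2).
  { unfold log2, Rdiv. rewrite ln_mult, ln_Rinv by (try apply Rinv_0_lt_compat; lra). reflexivity. }
  rewrite minus_IZR, Hlog.
  pose proof (floorZ_le (ln x / ln (1 + delta))). pose proof (floorZ_gt (ln y / ln (1 + delta))).
  set (D := ln x - ln y) in *.
  replace ((1 + delta * ln 2 / ln (1 + delta)) * (1 + / delta * (D / ln 2)))
    with (1 + D / ln (1 + delta) + (delta * ln 2 / ln (1 + delta) + D / (delta * ln 2)))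
    by (field; repeat split; lra).
  assert (ln x / ln (1 + delta) - ln y / ln (1 + delta) = D / ln (1 + delta))
    by (unfold D; field; lra).
  assert (0 < delta * ln 2 / ln (1 + delta))
    by (apply Rdiv_lt_0_compat; [apply Rmult_lt_0_compat|]; assumption).
  assert (0 <= D / (delta * ln 2))
    by (apply Rle_mult_inv_pos; [|apply Rmult_lt_0_compat]; assumption).
  lra.
Qed.

Theorem mainTheorem1 :
  forall delta : R, 0 < delta ->
  exists K : R,
  forall (n : nat) (p phat : nat -> R),
    (forall j, (j < n)%nat -> 1 <= p j) ->
    (forall j, (j < n)%nat -> 0 < phat j) ->
    (forall j, (j < n)%nat -> phat j <= p j) ->
    exists N : nat,
      let s := pmlf_run delta p phat n N in
      ps_queue s = nil /\
      (forall S : offline_schedule, valid_offline n p S ->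
         sumR n (ps_comp s) <= (2 + 2 * delta) * sumR n (off_comp p S)) /\
      (forall j, (j < n)%nat ->
         INR (ps_npre s j) <= K * (1 + / delta * log2 (p j / phat j))).
Proof.
  intros delta Hd. exists (1 + delta * ln 2 / ln (1 + delta)).
  intros n p phat Hp Hph Hle.
  destruct (pmlf_terminates delta p phat n Hd Hp Hph Hle) as [N Hnil].
  pose proof (pmlf_run_inv delta p phat n Hd Hp Hph Hle N) as Hinv.
  exists N. split; [exact Hnil|split].
  - intros S HS.
    assert (Hpos : forall j, (j < n)%nat -> 0 < p j) by (intros j Hj; pose proof (Hp j Hj); lra).
    pose proof (offline_lower_bound n p S HS Hpos).
    pose proof (pmlf_final_bound delta p phat n _ Hinv Hnil).
    nra.
  - intros j Hj. eapply Rle_trans; [exact (inv_npre _ _ _ _ _ Hinv j Hj)|].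
    apply level_gap_le_log; auto.
Qed.
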